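(* Let $\mathfrak{l}$ be a finite-dimensional restricted Lie algebra over an algebraically closed field $\mathbb{K}$ of characteristic $p$ which is perfect, i.e. $[\mathfrak{l},\mathfrak{l}]=\mathfrak{l}$, and let $\chi\in\mathfrak{l}^\ast$. Let $\mathfrak{l}_\chi=\mathfrak{l}\oplus\mathbb{K}c$ be the restricted Lie algebra with bracket $[a+\alpha c,b+\beta c]=[a,b]$ and $p$-map $(a+\alpha c)^{[p]}=a^{[p]}+(\chi(a)^p+\alpha^p)c$. Then the central extension of restricted Lie algebras $0\to\mathbb{K}c\to\mathfrak{l}_\chi\to\mathfrak{l}\to0$ is split (i.e. there is a restricted Lie algebra homomorphism $s:\mathfrak{l}\to\mathfrak{l}_\chi$ right inverse to the projection) if and only if $\chi=0$. *)

From HB Require Import structures.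
From mathcomp Require Import all_boot all_order all_algebra.
Set Implicit Arguments. Unset Strict Implicit. Unset Printing Implicit Defensive.
Import Order.TTheory GRing.Theory Num.Theory.
Local Open Scope ring_scope.

Section LieDefs.
Variables (K : fieldType) (L : lmodType K).

Definition lie_algebra (br : L -> L -> L) : Prop :=
  [/\ (forall (k : K) a b c, br (k *: a + b) c = k *: br a c + br b c),
      (forall (k : K) a b c, br a (k *: b + c) = k *: br a b + br a c),
      (forall a, br a a = 0) &
      (forall a b c, br a (br b c) + br b (br c a) + br c (br a b) = 0)].

(* Jacobson's sum  \sum_{i=1}^{p-1} s_i(a,b), where i s_i(a,b) is the
   coefficient of t^(i-1) in ad(t a + b)^(p-1)(a).  Expanding the power,
   this coefficient is the sum over words w in {a,b}^(p-1) with exactly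
   i-1 letters a of ad(w_1) ... ad(w_(p-1)) (a). *)
Definition jacobson_sum (p : nat) (br : L -> L -> L) (a b : L) : L :=
  \sum_(w : (p.-1).-tuple bool)
     ((count id w).+1%:R)^-1 *:
       foldr (fun (x : bool) acc => br (if x then a else b) acc) a w.

Definition restricted_lie (p : nat) (br : L -> L -> L) (pm : L -> L) : Prop :=
  [/\ lie_algebra br,
      (forall (k : K) a, pm (k *: a) = k ^+ p *: pm a),
      (forall a x, br (pm a) x = iter p (br a) x) &
      (forall a b, pm (a + b) = pm a + pm b + jacobson_sum p br a b)].

Definition perfect_lie (br : L -> L -> L) : Prop :=
  forall x : L, exists (n : nat) (k : n.-tuple K) (a b : n.-tuple L),
    x = \sum_(i < n) tnth k i *: br (tnth a i) (tnth b i).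

End LieDefs.

Section CentralExt.
Variables (K : fieldType) (L : lmodType K).

(* l_chi = l (+) K c, elements (a, alpha) standing for a + alpha c. *)
Definition ext_bracket (br : L -> L -> L) (x y : L * K^o) : L * K^o :=
  (br x.1 y.1, 0).

Definition ext_pmap (p : nat) (pm : L -> L) (chi : L -> K) (x : L * K^o)
  : L * K^o :=
  (pm x.1, chi x.1 ^+ p + x.2 ^+ p).

Definition ext_proj (x : L * K^o) : L := x.1.

Definition restricted_hom (M N : lmodType K)
  (brM : M -> M -> M) (pmM : M -> M) (brN : N -> N -> N) (pmN : N -> N)
  (f : M -> N) : Prop :=
  [/\ (forall (k : K) a b, f (k *: a + b) = k *: f a + f b),
      (forall a b, f (brM a b) = brN (f a) (f b)) &
      (forall a, f (pmM a) = pmN (f a))].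

Definition ext_splits (p : nat) (br : L -> L -> L) (pm : L -> L) (chi : L -> K)
  : Prop :=
  exists s : L -> L * K^o,
    restricted_hom br pm (ext_bracket br) (ext_pmap p pm chi) s /\
    (forall a, ext_proj (s a) = a).

End CentralExt.

From HB Require Import structures.
From mathcomp Require Import all_boot all_order all_algebra.
From Stdlib Require Import FunctionalExtensionality.
Set Implicit Arguments. Unset Strict Implicit.
Import GRing.Theory.
Local Open Scope ring_scope.

(* A section of the projection has the form a |-> a + f(a) c for a linear
   functional f.  Since brackets in l_chi have no c-component, f kills
   [l,l] = l, so f = 0; comparing c-components of s(a^[p]) = s(a)^[p] then
   gives 0 = chi(a)^p.  Conversely, for chi = 0 the inclusion a |-> a + 0 c
   respects the p-map because 0^p = 0 when p > 0. *)

Section PerfectFunctional.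
Variables (K : fieldType) (L : lmodType K) (br : L -> L -> L).

Lemma perfect_functional_eq0 (f : L -> K) :
  perfect_lie br ->
  (forall (k : K) a b, f (k *: a + b) = k * f a + f b) ->
  (forall a b, f (br a b) = 0) ->
  forall x, f x = 0.
Proof.
move=> Hperf f_lin f_br x.
have fD a b : f (a + b) = f a + f b by have := f_lin 1 a b; rewrite scale1r mul1r.
have f0 : f 0 = 0 by apply: (addIr (f 0)); rewrite -fD !add0r.
have fZ (k : K) a : f (k *: a) = k * f a by rewrite -[k *: a]addr0 f_lin f0 addr0.
have [n [k [a [b ->]]]] := Hperf x.
rewrite (big_morph f fD f0); apply: big1 => i _.
by rewrite fZ f_br mulr0.
Qed.

End PerfectFunctional.

Section CentralExtensionSplitting.
Variables (K : fieldType) (L : lmodType K) (p : nat).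
Variables (br : L -> L -> L) (pm : L -> L) (chi : L -> K).
Hypothesis p_gt0 : (0 < p)%N.

Lemma section_pairE (s : L -> L * K^o) :
  (forall a, ext_proj (s a) = a) -> forall a, s a = (a, (s a).2).
Proof.
by move=> Hproj a; move: (Hproj a); rewrite /ext_proj; case: (s a) => x y /= ->.
Qed.

Lemma ext_splits_chi_eq0 :
  perfect_lie br -> ext_splits p br pm chi -> forall a, chi a = 0.
Proof.
move=> Hperf [s [[s_lin s_br s_pm] Hproj]] a.
have sE := section_pairE Hproj.
have s2_eq0 : forall x, (s x).2 = 0.
  apply: (perfect_functional_eq0 Hperf).
    by move=> k x y; rewrite s_lin.
  by move=> x y; rewrite s_br.
have sE0 x : s x = (x, 0) by rewrite sE s2_eq0.
have := s_pm a; rewrite !sE0 /ext_pmap /= expr0n eqn0Ngt p_gt0 addr0.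
by case=> /esym /eqP; rewrite expf_eq0 => /andP[_ /eqP].
Qed.

Lemma zero_section_restricted_hom :
  restricted_hom br pm (ext_bracket br) (ext_pmap p pm (fun _ => 0))
    (fun a => (a, 0 : K^o)).
Proof.
split=> [k a b | // | a].
  by apply/eqP; rewrite xpair_eqE /= eqxx /= scaler0 addr0.
by rewrite /ext_pmap expr0n eqn0Ngt p_gt0 addr0.
Qed.

End CentralExtensionSplitting.

Theorem corollary1p2p9 (K : closedFieldType) (p : nat) (hp : p \in [pchar K])
  (L : vectType K) (br : L -> L -> L) (pm : L -> L)
  (HL : restricted_lie p br pm) (Hperf : perfect_lie br)
  (chi : L -> K) (Hchi : forall (k : K) (a b : L), chi (k *: a + b) = k * chi a + chi b) :
  ext_splits p br pm chi <-> chi = (fun _ => 0).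
Proof.
have p_gt0 : (0 < p)%N := prime_gt0 (pcharf_prime hp).
split=> [Hsplit | ->].
  exact: functional_extensionality (ext_splits_chi_eq0 p_gt0 Hperf Hsplit).
by exists (fun a => (a, 0 : K^o)); split; [exact: zero_section_restricted_hom |].
Qed.
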